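(* $\mathrm{Sort}(\mathrm{SC}_{1\underline{32}})$ is not a permutation class.
   Context: $\mathfrak S_n$ is the set of permutations of $\{1,\dots,n\}$. A permutation $\pi$ contains a (classical) permutation $\tau$ if some subsequence of $\pi$ has the same relative order as $\tau$. A permutation class is a set $\Pi$ of permutations such that every permutation contained in some $\pi\in\Pi$ is also in $\Pi$. A vincular pattern is a permutation with some entries underlined; a sequence contains it if it has a subsequence with the same relative order in which entries corresponding to adjacent underlined entries occupy consecutive positions. An occurrence of $1\underline{32}$ is $a_i a_j a_{j+1}$ with $i<j$ and $a_i<a_{j+1}<a_j$. For a pattern $\sigma$, the map $\mathrm{SC}_\sigma$ acts on $\tau$: read entries left to right; when the next entry $x$ is read, if pushing $x$ yields a stack whose entries read top to bottom (stack adjacency = consecutive positions) avoid $\sigma$, push $x$; otherwise pop the top stack entry to the output and repeat. At the end pop all remaining entries; the output is $\mathrm{SC}_\sigma(\tau)$. West's stack-sorting map is $s=\mathrm{SC}_{21}$. $\mathrm{Sort}_n(\mathrm{SC}_\sigma)=\{\tau\in\mathfrak S_n : s(\mathrm{SC}_\sigma(\tau))=12\cdots n\}$ and $\mathrm{Sort}(\mathrm{SC}_\sigma)=\bigcup_{n\ge1}\mathrm{Sort}_n(\mathrm{SC}_\sigma)$. *)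

From mathcomp Require Import all_boot.
Set Implicit Arguments. Unset Strict Implicit. Unset Printing Implicit Defensive.

Definition is_perm (n : nat) (s : seq nat) : bool := perm_eq s (iota 1 n).
Definition is_permutation (s : seq nat) : bool := (0 < size s) && is_perm (size s) s.

Definition order_iso (a b : seq nat) : Prop :=
  size a = size b /\
  forall i j, i < size a -> j < size a ->
    (nth 0 a i < nth 0 a j) = (nth 0 b i < nth 0 b j).

Definition contains (pi tau : seq nat) : Prop :=
  exists m : bitseq, size m = size pi /\ order_iso (mask m pi) tau.

Definition has21 (a : seq nat) : bool :=
  has (fun i => has (fun j => (i < j) && (nth 0 a j < nth 0 a i))
                      (iota 0 (size a))) (iota 0 (size a)).

Definition has1_32 (a : seq nat) : bool :=
  has (fun i => has (fun j =>
     [&& i < j, j.+1 < size a, nth 0 a i < nth 0 a j.+1 & nth 0 a j.+1 < nth 0 a j])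
     (iota 0 (size a))) (iota 0 (size a)).

(* The pattern-avoiding stack machine SC: the stack is a list read top to bottom
   (head = top).  [contP] decides whether a stack word contains the pattern. *)
Fixpoint push_elt (contP : seq nat -> bool) (x : nat) (stack out : seq nat)
  : seq nat * seq nat :=
  if ~~ contP (x :: stack) then (x :: stack, out)
  else match stack with
       | [::] => (x :: stack, out)   (* never reached: a single entry avoids *)
       | y :: st => push_elt contP x st (rcons out y)
       end.

Fixpoint SC_aux (contP : seq nat -> bool) (tau stack out : seq nat) : seq nat :=
  match tau with
  | [::] => out ++ stack
  | x :: t => let p := push_elt contP x stack out in SC_aux contP t p.1 p.2
  end.

Definition SC (contP : seq nat -> bool) (tau : seq nat) : seq nat :=
  SC_aux contP tau [::] [::].

Definition west_s (tau : seq nat) : seq nat := SC has21 tau.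

Definition Sort_n (n : nat) (tau : seq nat) : Prop :=
  is_perm n tau /\ west_s (SC has1_32 tau) = iota 1 n.

Definition Sort132 (tau : seq nat) : Prop := exists n, 1 <= n /\ Sort_n n tau.

Definition perm_class (Pi : seq nat -> Prop) : Prop :=
  (forall pi, Pi pi -> is_permutation pi) /\
  (forall pi tau, Pi pi -> is_permutation tau -> contains pi tau -> Pi tau).

(** [SC_{1_32}(2413) = 4312] and [s(4312) = 1234], so [2413] is sorted; but
    [SC_{1_32}(132) = 231] and [s(231) = 213], so its pattern [132]
    (occurring as [243]) is not. *)

From mathcomp Require Import all_boot.

Lemma not_perm_class_witness (Pi : seq nat -> Prop) (pi tau : seq nat) :
  Pi pi -> contains pi tau -> is_permutation tau -> ~ Pi tau ->
  ~ perm_class Pi.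
Proof. by move=> Ppi pi_tau perm_tau notPtau [_ /(_ pi tau Ppi perm_tau pi_tau)]. Qed.

Definition order_isob (a b : seq nat) : bool :=
  (size a == size b) &&
  all (fun i => all (fun j => (nth 0 a i < nth 0 a j) == (nth 0 b i < nth 0 b j))
                    (iota 0 (size a)))
      (iota 0 (size a)).

Lemma order_isoP (a b : seq nat) : reflect (order_iso a b) (order_isob a b).
Proof.
apply: (iffP andP) => [[/eqP eq_size /allP ab_iso] | [eq_size ab_iso]].
  split=> // i j lt_i lt_j.
  have : i \in iota 0 (size a) by rewrite mem_iota.
  by move=> /ab_iso /allP /(_ j); rewrite mem_iota => /(_ lt_j) /eqP.
split; first exact/eqP.
apply/allP => i; rewrite mem_iota => /= lt_i; apply/allP => j.
by rewrite mem_iota => /= lt_j; rewrite ab_iso.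
Qed.

Definition sort132b (tau : seq nat) : bool :=
  is_permutation tau && (west_s (SC has1_32 tau) == iota 1 (size tau)).

Lemma Sort132P (tau : seq nat) : reflect (Sort132 tau) (sort132b tau).
Proof.
apply: (iffP andP) => [[/andP [size_gt0 perm_tau] /eqP sorted]
                      | [n [n_gt0 [perm_tau sorted]]]].
  by exists (size tau).
have size_tau : size tau = n by rewrite (perm_size perm_tau) size_iota.
by rewrite /is_permutation size_tau n_gt0 perm_tau sorted eqxx.
Qed.

Lemma Sort132_2413 : Sort132 [:: 2; 4; 1; 3].
Proof. exact/Sort132P. Qed.

Lemma not_Sort132_132 : ~ Sort132 [:: 1; 3; 2].
Proof. by move/Sort132P. Qed.

Lemma contains_2413_132 : contains [:: 2; 4; 1; 3] [:: 1; 3; 2].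
Proof. by exists [:: true; true; false; true]; split; last exact/order_isoP. Qed.

Theorem mainTheorem18 : ~ perm_class Sort132.
Proof.
exact: not_perm_class_witness Sort132_2413 contains_2413_132 isT not_Sort132_132.
Qed.
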